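(* In the algebra $\mathcal O_q$ defined in the context, for all $n\in\mathbb N$: $$\mathcal W_{-n}=-(q-q^{-1})^{-1}\sum_{k=0}^n\sum_{\ell=0}^k\binom{k}{\ell}q^{2\ell-k}[2]_q^{-k-2}\tilde{\mathcal G}_{n-k}B_{(k-2\ell)\delta+\alpha_0},$$ $$\mathcal W_{n+1}=-(q-q^{-1})^{-1}\sum_{k=0}^n\sum_{\ell=0}^k\binom{k}{\ell}q^{k-2\ell}[2]_q^{-k-2}\tilde{\mathcal G}_{n-k}B_{(k-2\ell)\delta+\alpha_1}.$$
   Context: All algebras are associative and unital over a field $\mathbb F$; $q\in\mathbb F$ is nonzero and not a root of unity; $[n]_q=(q^n-q^{-n})/(q-q^{-1})$. For elements $X,Y$ of an algebra, $[X,Y]=XY-YX$ and $[X,Y]_q=qXY-q^{-1}YX$. Let $\rho=-(q^2-q^{-2})^2$. The algebra $\mathcal O_q$ is defined by generators $\mathcal W_{-k},\mathcal W_{k+1},\mathcal G_{k+1},\tilde{\mathcal G}_{k+1}$ ($k\in\mathbb N$) and the following relations for all $k,\ell\in\mathbb N$: $[\mathcal W_0,\mathcal W_{k+1}]=[\mathcal W_{-k},\mathcal W_1]=(\tilde{\mathcal G}_{k+1}-\mathcal G_{k+1})/(q+q^{-1})$; $[\mathcal W_0,\mathcal G_{k+1}]_q=[\tilde{\mathcal G}_{k+1},\mathcal W_0]_q=\rho\mathcal W_{-k-1}-\rho\mathcal W_{k+1}$; $[\mathcal G_{k+1},\mathcal W_1]_q=[\mathcal W_1,\tilde{\mathcal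 G}_{k+1}]_q=\rho\mathcal W_{k+2}-\rho\mathcal W_{-k}$; $[\mathcal W_{-k},\mathcal W_{-\ell}]=0$, $[\mathcal W_{k+1},\mathcal W_{\ell+1}]=0$; $[\mathcal W_{-k},\mathcal W_{\ell+1}]+[\mathcal W_{k+1},\mathcal W_{-\ell}]=0$; $[\mathcal W_{-k},\mathcal G_{\ell+1}]+[\mathcal G_{k+1},\mathcal W_{-\ell}]=0$; $[\mathcal W_{-k},\tilde{\mathcal G}_{\ell+1}]+[\tilde{\mathcal G}_{k+1},\mathcal W_{-\ell}]=0$; $[\mathcal W_{k+1},\mathcal G_{\ell+1}]+[\mathcal G_{k+1},\mathcal W_{\ell+1}]=0$; $[\mathcal W_{k+1},\tilde{\mathcal G}_{\ell+1}]+[\tilde{\mathcal G}_{k+1},\mathcal W_{\ell+1}]=0$; $[\mathcal G_{k+1},\mathcal G_{\ell+1}]=0$, $[\tilde{\mathcal G}_{k+1},\tilde{\mathcal G}_{\ell+1}]=0$; $[\tilde{\mathcal G}_{k+1},\mathcal G_{\ell+1}]+[\mathcal G_{k+1},\tilde{\mathcal G}_{\ell+1}]=0$. Convention: $\tilde{\mathcal G}_0=-(q-q^{-1})[2]_q^2$. Define $B_\delta=q^{-2}\mathcal W_1\mathcal W_0-\mathcal W_0\mathcal W_1$; $B_{\alpha_0}=\mathcal W_0$, $B_{\delta+\alpha_0}=\mathcal W_1+\frac{q[B_\delta,\mathcal W_0]}{(q-q^{-1})(q^2-q^{-2})}$, $B_{n\delta+\alpha_0}=B_{(n-2)\delta+\alpha_0}+\frac{q[B_\delta,B_{(n-1)\delta+\alpha_0}]}{(q-q^{-1})(q^2-q^{-2})}$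 for $n\ge2$; $B_{\alpha_1}=\mathcal W_1$, $B_{\delta+\alpha_1}=\mathcal W_0-\frac{q[B_\delta,\mathcal W_1]}{(q-q^{-1})(q^2-q^{-2})}$, $B_{n\delta+\alpha_1}=B_{(n-2)\delta+\alpha_1}-\frac{q[B_\delta,B_{(n-1)\delta+\alpha_1}]}{(q-q^{-1})(q^2-q^{-2})}$ for $n\ge2$. For negative integers $k$, set $B_{k\delta+\alpha_0}=B_{(-k-1)\delta+\alpha_1}$ and $B_{k\delta+\alpha_1}=B_{(-k-1)\delta+\alpha_0}$. *)

From HB Require Import structures.
From mathcomp Require Import all_boot all_order all_algebra.
Set Implicit Arguments. Unset Strict Implicit. Unset Printing Implicit Defensive.
Import Order.TTheory GRing.Theory Num.Theory.
Local Open Scope ring_scope.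

Section OqDefs.
Variables (F : fieldType) (A : algType F) (q : F).

Definition qint (n : nat) : F := (q ^+ n - q ^- n) / (q - q^-1).

Definition comm (X Y : A) : A := X * Y - Y * X.
Definition qcomm (X Y : A) : A := q *: (X * Y) - q^-1 *: (Y * X).

Definition rho : F := - (q ^+ 2 - q ^- 2) ^+ 2.

(* Encoding of the generators:
   Wm k = W_{-k},  Wp k = W_{k+1},  G k = G_{k+1},  Gt k = tilde G_{k+1}  (k : nat) *)
Definition Oq_relations (Wm Wp G Gt : nat -> A) : Prop :=
  (forall k, comm (Wm 0%N) (Wp k) = (q + q^-1)^-1 *: (Gt k - G k)
              /\ comm (Wm k) (Wp 0%N) = (q + q^-1)^-1 *: (Gt k - G k)) /\
      (forall k, qcomm (Wm 0%N) (G k) = rho *: (Wm k.+1 - Wp k)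
              /\ qcomm (Gt k) (Wm 0%N) = rho *: (Wm k.+1 - Wp k)) /\
      (forall k, qcomm (G k) (Wp 0%N) = rho *: (Wp k.+1 - Wm k)
              /\ qcomm (Wp 0%N) (Gt k) = rho *: (Wp k.+1 - Wm k)) /\
      (forall k l, comm (Wm k) (Wm l) = 0 /\ comm (Wp k) (Wp l) = 0) /\
      (forall k l, comm (Wm k) (Wp l) + comm (Wp k) (Wm l) = 0) /\
      (forall k l, [/\ comm (Wm k) (G l) + comm (G k) (Wm l) = 0,
                      comm (Wm k) (Gt l) + comm (Gt k) (Wm l) = 0,
                      comm (Wp k) (G l) + comm (G k) (Wp l) = 0 &
                      comm (Wp k) (Gt l) + comm (Gt k) (Wp l) = 0]) /\
      (forall k l, comm (G k) (G l) = 0 /\ comm (Gt k) (Gt l) = 0) /\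
      (forall k l, comm (Gt k) (G l) + comm (G k) (Gt l) = 0).

Definition Gtilde (Gt : nat -> A) (n : nat) : A :=
  match n with
  | 0%N => (- (q - q^-1) * qint 2 ^+ 2)%:A
  | m.+1 => Gt m
  end.

(* second-order recursion: s 0 = x0, s 1 = x1, s (n+2) = f (s n) (s (n+1)) *)
Fixpoint rec2 (x0 x1 : A) (f : A -> A -> A) (n : nat) : A * A :=
  match n with
  | 0%N => (x0, x1)
  | m.+1 => let p := rec2 x0 x1 f m in (p.2, f p.1 p.2)
  end.

Section PBW.
Variables (W0 W1 : A).
Definition Bdelta : A := q ^- 2 *: (W1 * W0) - W0 * W1.
Definition cB : F := q / ((q - q^-1) * (q ^+ 2 - q ^- 2)).

Definition Ba0 (n : nat) : A :=
  (rec2 W0 (W1 + cB *: comm Bdelta W0)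
        (fun x y => x + cB *: comm Bdelta y) n).1.
Definition Ba1 (n : nat) : A :=
  (rec2 W1 (W0 - cB *: comm Bdelta W1)
        (fun x y => x - cB *: comm Bdelta y) n).1.

(* integer-indexed versions, with B_{k delta+alpha_0} = B_{(-k-1)delta+alpha_1} for k<0 etc. *)
Definition B0 (m : int) : A :=
  match m with Posz n => Ba0 n | Negz n => Ba1 n end.
Definition B1 (m : int) : A :=
  match m with Posz n => Ba1 n | Negz n => Ba0 n end.
End PBW.
End OqDefs.

From HB Require Import structures.
From mathcomp Require Import all_boot all_order all_algebra.
From mathcomp Require Import ring zify.
Import Order.TTheory GRing.Theory Num.Theory.
Set Implicit Arguments. Unset Strict Implicit. Unset Printing Implicit Defensive.
Local Open Scope ring_scope.

(* Write a = W_0, b = W_1.  The relations of O_q give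
     q [B_delta, W_{-n}] = [a, G~_{n+1}],   q [B_delta, W_{n+1}] = [b, G~_{n+1}],
   and B_delta commutes with every G~_k; inserted in the q-commutator relations
   for G~_{n+1} this yields the two-step recursions
     rho (W_{-n-1} - W_{n+1}) = (q - q^-1) G~_{n+1} a - [B_delta, W_{-n}],
     rho (W_{n+2} - W_{-n})   = (q - q^-1) G~_{n+1} b + q^2 [B_delta, W_{n+1}].
   With the integer indexing of the context, both PBW recursions become the single
   rule, for all z in Z,
     B_{(z+1)delta+alpha_0} = B_{(z-1)delta+alpha_0} + c [B_delta, B_{z delta+alpha_0}],
   where c = q / ((q - q^-1)(q^2 - q^-2)), and B_{z delta+alpha_1} = B_{(-z-1)delta+alpha_0}.
   Pascal's rule then shows that the inner sums X_k, Y_k of the two formulas satisfy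
     X_{k+1} = Y_k - rho^-1 [B_delta, X_k],   Y_{k+1} = X_k + q^2 rho^-1 [B_delta, Y_k],
   so the convolutions sum_k G~_{n-k} X_k and sum_k G~_{n-k} Y_k obey the recursions
   of the W's up to the factor -(q - q^-1)^-1, and induction on n concludes. *)

Lemma mulf_expV2 (F : fieldType) (x : F) : x != 0 -> x * x ^- 2 = x^-1.
Proof. by move=> hx; rewrite expr2 invfM mulrA mulfV ?mul1r. Qed.

Lemma subrACA (V : zmodType) (a b c d : V) : a - b - (c - d) = a - c - (b - d).
Proof. by rewrite !opprB addrACA [RHS]addrACA (addrC (- b)). Qed.

Lemma sumr_binS (V : zmodType) k (f : nat -> V) :
  \sum_(l < k.+2) f l *+ 'C(k.+1, l) =
  \sum_(l < k.+1) f l *+ 'C(k, l) + \sum_(l < k.+1) f l.+1 *+ 'C(k, l).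
Proof.
rewrite big_ord_recl [in X in _ = X + _]big_ord_recl /= !bin0.
under eq_bigr do rewrite /bump leq0n add1n binS mulrnDr.
under [in X in _ = _ + X + _]eq_bigr do rewrite /bump leq0n add1n.
by rewrite big_split /= addrA big_ord_recr /= bin_small // mulr0n addr0.
Qed.

Section Scalars.
Variables (F : fieldType) (q : F).

Lemma rhoE : rho q = - ((q - q^-1) * (q + q^-1)) ^+ 2.
Proof. by rewrite /rho -exprVn subr_sqr. Qed.

Hypotheses (hq0 : q != 0) (hq2 : q ^+ 2 != 1) (hq4 : q ^+ 4 != 1).

Lemma qsubV_neq0 : q - q^-1 != 0.
Proof.
apply: contraNneq hq2 => /eqP; rewrite subr_eq0 => /eqP h.
by rewrite expr2 {2}h mulfV.
Qed.

Lemma qaddV_neq0 : q + q^-1 != 0.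
Proof.
apply: contraNneq hq4 => /eqP; rewrite addr_eq0 => /eqP h.
have sq : q ^+ 2 = -1 by rewrite expr2 {2}h mulrN mulfV.
by rewrite (_ : 4 = 2 * 2)%N // exprM sq sqrrN expr1n.
Qed.

Lemma rho_neq0 : rho q != 0.
Proof. by rewrite rhoE oppr_eq0 expf_neq0 // mulf_neq0 ?qsubV_neq0 ?qaddV_neq0. Qed.

Lemma qint2E : qint q 2 = q + q^-1.
Proof. by rewrite /qint -exprVn subr_sqr mulrC mulKf ?qsubV_neq0. Qed.

Lemma cB_rho : q^-1 * cB q / (q + q^-1) = - (rho q)^-1.
Proof.
have hd := qsubV_neq0; have hK := qaddV_neq0.
rewrite rhoE /cB -exprVn subr_sqr.
move: (q - q^-1) (q + q^-1) hd hK => d K hd hK.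
by rewrite invrN opprK; field; rewrite hq0 hd hK.
Qed.

Lemma rhoV_qsubV : (rho q)^-1 * (q - q^-1) = - (q - q^-1)^-1 * (q + q^-1) ^- 2.
Proof.
have hd := qsubV_neq0; have hK := qaddV_neq0; rewrite rhoE.
move: (q - q^-1) (q + q^-1) hd hK => d K hd hK.
by rewrite invrN !mulNr; congr (- _); field; rewrite hd hK.
Qed.

Lemma cB_rho_sqr : q * cB q / (q + q^-1) = - (q ^+ 2 / rho q).
Proof. by rewrite -mulrN -cB_rho !mulrA expr2 mulfK. Qed.
End Scalars.

Section Commutators.
Variables (F : fieldType) (A : algType F).
Implicit Types (x y z : A) (c : F).

Lemma commC x y : comm y x = - comm x y.
Proof. by rewrite /comm opprB. Qed.

Lemma commDl x y z : comm (x + y) z = comm x z + comm y z.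
Proof. by rewrite /comm mulrDl mulrDr addrACA opprD. Qed.

Lemma commNl x y : comm (- x) y = - comm x y.
Proof. by rewrite /comm mulNr mulrN opprB opprK addrC. Qed.

Lemma commBl x y z : comm (x - y) z = comm x z - comm y z.
Proof. by rewrite commDl commNl. Qed.

Lemma commBr x y z : comm x (y - z) = comm x y - comm x z.
Proof. by rewrite commC commBl !(commC x) opprB opprK addrC. Qed.

Lemma commZl c x y : comm (c *: x) y = c *: comm x y.
Proof. by rewrite /comm -scalerAl -scalerAr scalerBr. Qed.

Lemma commZr c x y : comm x (c *: y) = c *: comm x y.
Proof. by rewrite /comm -scalerAl -scalerAr scalerBr. Qed.

Lemma commMl x y z : comm (x * y) z = x * comm y z + comm x z * y.
Proof. by rewrite /comm mulrBl mulrBr !mulrA addrA subrK. Qed.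

Lemma commMr x y z : comm x (y * z) = comm x y * z + y * comm x z.
Proof. by rewrite /comm mulrBl mulrBr !mulrA addrA subrK. Qed.

Lemma comm_sumr I (r : seq I) (P : pred I) (f : I -> A) x :
  comm x (\sum_(i <- r | P i) f i) = \sum_(i <- r | P i) comm x (f i).
Proof. by rewrite /comm mulr_sumr mulr_suml -sumrB. Qed.

Lemma comm_alg c x : comm c%:A x = 0.
Proof. by rewrite /comm mulr_algl mulr_algr subrr. Qed.

Variable q : F.

Lemma qcommBl x y z : qcomm q (x - y) z = qcomm q x z - qcomm q y z.
Proof. by rewrite /qcomm mulrBl mulrBr !scalerBr subrACA. Qed.

Lemma qcommBr x y z : qcomm q x (y - z) = qcomm q x y - qcomm q x z.
Proof. by rewrite /qcomm mulrBl mulrBr !scalerBr subrACA. Qed.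

Lemma qcommZl c x y : qcomm q (c *: x) y = c *: qcomm q x y.
Proof. by rewrite /qcomm -scalerAl -scalerAr scalerBr !scalerA (mulrC q) (mulrC q^-1). Qed.

Lemma qcommZr c x y : qcomm q x (c *: y) = c *: qcomm q x y.
Proof. by rewrite /qcomm -scalerAl -scalerAr scalerBr !scalerA (mulrC q) (mulrC q^-1). Qed.

Lemma qcommB_comm x y : qcomm q x y - qcomm q y x = (q + q^-1) *: comm x y.
Proof. by rewrite /qcomm /comm subrACA opprB scalerDl !scalerBr. Qed.
End Commutators.

Section BdeltaCommutators.
Variables (F : fieldType) (A : algType F) (q : F) (a b : A).
Hypothesis hq0 : q != 0.
Local Notation Bd := (Bdelta q a b).

Lemma comm_Bdelta_l y : comm a y = 0 -> q *: comm Bd y = qcomm q a (comm y b).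
Proof.
move=> hay; rewrite /Bdelta commBl commZl !commMl hay mulr0 mul0r addr0 add0r.
by rewrite (commC y) mulrN mulNr scalerN opprK addrC scalerDr scalerN scalerA (mulf_expV2 hq0).
Qed.

Lemma comm_Bdelta_r y : comm b y = 0 -> q *: comm Bd y = - qcomm q (comm a y) b.
Proof.
move=> hby; rewrite /Bdelta commBl commZl !commMl hby mulr0 mul0r addr0 add0r.
by rewrite /qcomm opprB scalerBr scalerA (mulf_expV2 hq0).
Qed.

Lemma comm_Bdelta_qcomm x P :
  comm a x = qcomm q a P -> comm b x = - qcomm q P b ->
  comm Bd x = q^-1 *: comm (comm b a) P.
Proof.
move=> hax hbx.
have hba : comm (b * a) x = q *: comm (b * a) P.
  rewrite commMl hax hbx /qcomm /comm mulrBr mulNr mulrBl opprB.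
  by rewrite -!scalerAr -!scalerAl !mulrA subrKA scalerBr.
have hab : comm (a * b) x = q^-1 *: comm (a * b) P.
  rewrite commMl hax hbx /qcomm /comm mulrN mulrBr opprB mulrBl.
  by rewrite -!scalerAr -!scalerAl !mulrA subrKA scalerBr.
rewrite /Bdelta commBl commZl hba hab scalerA [q ^- 2 * q]mulrC (mulf_expV2 hq0).
by rewrite -scalerBr -commBl.
Qed.
End BdeltaCommutators.

Section QBinomialCombination.
Variables (F : fieldType) (A : algType F) (q c : F) (D : A) (b : int -> A).
Hypothesis b_rec : forall z, b (z + 1) = b (z - 1) + c *: comm D (b z).

Definition qbin_comb (k : nat) (m : int) : A :=
  \sum_(l < k.+1) ('C(k, l)%:R * q ^ (2 * (l : nat)%:Z - k%:Z)) *: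
     b (m + k%:Z - 2 * (l : nat)%:Z).

Lemma qbin_comb_rec k m :
  qbin_comb k (m + 1) = qbin_comb k (m - 1) + c *: comm D (qbin_comb k m).
Proof.
rewrite /qbin_comb comm_sumr scaler_sumr -big_split; apply: eq_bigr => l _ /=.
rewrite (_ : m + 1 + _ - _ = m + k%:Z - 2 * (l : nat)%:Z + 1); last by lia.
rewrite (_ : m - 1 + _ - _ = m + k%:Z - 2 * (l : nat)%:Z - 1); last by lia.
by rewrite b_rec scalerDr commZr !scalerA [c * _]mulrC.
Qed.

Hypothesis hq0 : q != 0.

Lemma qbin_combS k m :
  qbin_comb k.+1 m = q^-1 *: qbin_comb k (m + 1) + q *: qbin_comb k (m - 1).
Proof.
pose f (l : nat) := q ^ (2 * l%:Z - k.+1%:Z) *: b (m + k.+1%:Z - 2 * l%:Z).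
have -> : qbin_comb k.+1 m = \sum_(l < k.+2) f l *+ 'C(k.+1, l).
  by apply: eq_bigr => l _; rewrite mulr_natl -scalerMnl.
rewrite sumr_binS /qbin_comb !scaler_sumr; congr (_ + _); apply: eq_bigr => l _.
- rewrite /f scalerMnl scalerA; congr (_ *: b _); last by lia.
  rewrite (_ : 2 * _ - _ = 2 * (l : nat)%:Z - k%:Z + (-1)); last by lia.
  by rewrite expfzDr // exprN1 -mulr_natl; ring.
- rewrite /f scalerMnl scalerA; congr (_ *: b _); last by lia.
  rewrite (_ : 2 * _ - _ = 2 * (l : nat)%:Z - k%:Z + 1); last by lia.
  by rewrite expfzDr // expr1z -mulr_natl; ring.
Qed.

Lemma qbin_combS_0 k :
  qbin_comb k.+1 0 = (q + q^-1) *: qbin_comb k (-1) + (q^-1 * c) *: comm D (qbin_comb k 0).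
Proof.
rewrite qbin_combS qbin_comb_rec sub0r scalerDr !scalerA.
by rewrite addrAC -scalerDl [q^-1 + q]addrC.
Qed.

Lemma qbin_combS_N1 k :
  qbin_comb k.+1 (-1) = (q + q^-1) *: qbin_comb k 0 - (q * c) *: comm D (qbin_comb k (-1)).
Proof.
have h : qbin_comb k (-1 - 1) = qbin_comb k 0 - (c *: comm D (qbin_comb k (-1))).
  by have := qbin_comb_rec k (-1); rewrite addNr => ->; rewrite addrK.
by rewrite qbin_combS addNr h scalerBr scalerA addrA -scalerDl [q^-1 + q]addrC.
Qed.
End QBinomialCombination.

Section PBWBasis.
Variables (F : fieldType) (A : algType F) (q : F) (W0 W1 : A).
Local Notation b := (B0 q W0 W1).
Local Notation Bd := (Bdelta q W0 W1).

Lemma B0_rec z : b (z + 1) = b (z - 1) + cB q *: comm Bd (b z).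
Proof.
case: z => [[|n]|n].
- by rewrite add0r.
- have -> : n.+1%:Z + 1 = n.+2%:Z by lia.
  by have -> : n.+1%:Z - 1 = n%:Z by lia.
- have -> : Negz n - 1 = Negz n.+1 by rewrite !NegzE; lia.
  case: n => [|n]; first by rewrite /= subrK.
  have -> : Negz n.+1 + 1 = Negz n by rewrite !NegzE; lia.
  by rewrite /= subrK.
Qed.

Lemma B1_B0 z : B1 q W0 W1 z = b (- z - 1).
Proof.
case: z => n.
- by have -> : - n%:Z - 1 = Negz n by rewrite NegzE; lia.
- by have -> : - Negz n - 1 = n%:Z by rewrite NegzE; lia.
Qed.

Hypotheses (hq0 : q != 0) (hq2 : q ^+ 2 != 1) (hq4 : q ^+ 4 != 1).
Local Notation K := (q + q^-1).

Definition Wm_term (k : nat) : A := \sum_(l < k.+1)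
  (('C(k, l)%:R * q ^ (2 * (l : nat)%:Z - k%:Z) * qint q 2 ^- (k + 2))
     *: b (k%:Z - 2 * (l : nat)%:Z)).

Definition Wp_term (k : nat) : A := \sum_(l < k.+1)
  (('C(k, l)%:R * q ^ (k%:Z - 2 * (l : nat)%:Z) * qint q 2 ^- (k + 2))
     *: B1 q W0 W1 (k%:Z - 2 * (l : nat)%:Z)).

Lemma Wm_termE k : Wm_term k = K ^- (k + 2) *: qbin_comb q b k 0.
Proof.
rewrite /Wm_term /qbin_comb scaler_sumr; apply: eq_bigr => l _.
by rewrite scalerA qint2E // mulrC add0r.
Qed.

(* Reversing the summation index l into k - l turns B1 back into B0. *)
Lemma Wp_termE k : Wp_term k = K ^- (k + 2) *: qbin_comb q b k (-1).
Proof.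
rewrite /Wp_term /qbin_comb scaler_sumr (reindex_inj rev_ord_inj).
apply: eq_bigr => l _ /=; have lk : (l <= k)%N by rewrite -ltnS.
rewrite subSS B1_B0 scalerA qint2E // [_ * (_ ^- _)]mulrC bin_sub // -subzn //.
by congr ((_ * (_ * q ^ _)) *: b _); lia.
Qed.

Lemma Wm_termS k : Wm_term k.+1 = Wp_term k - (rho q)^-1 *: comm Bd (Wm_term k).
Proof.
rewrite !Wm_termE Wp_termE (qbin_combS_0 B0_rec hq0) commZr addSn exprS invfM.
rewrite scalerDr !scalerA mulrAC mulVf ?qaddV_neq0 // mul1r -scaleNr; congr (_ + _ *: _).
by rewrite -mulNr -(cB_rho hq0 hq2 hq4); ring.
Qed.

Lemma Wp_termS k : Wp_term k.+1 = Wm_term k + (q ^+ 2 / rho q) *: comm Bd (Wp_term k).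
Proof.
rewrite !Wp_termE Wm_termE (qbin_combS_N1 B0_rec hq0) commZr addSn exprS invfM.
rewrite scalerBr !scalerA mulrAC mulVf ?qaddV_neq0 // mul1r -scaleNr; congr (_ + _ *: _).
by rewrite -[q ^+ 2 / rho q]opprK -(cB_rho_sqr hq0 hq2 hq4); ring.
Qed.

Lemma Wm_term0 : Wm_term 0 = K ^- 2 *: W0.
Proof. by rewrite Wm_termE /qbin_comb big_ord1 /= expr0z mul1r scale1r. Qed.

Lemma Wp_term0 : Wp_term 0 = K ^- 2 *: W1.
Proof. by rewrite Wp_termE /qbin_comb big_ord1 /= expr0z mul1r scale1r. Qed.
End PBWBasis.

Section OqRelations.
Variables (F : fieldType) (q : F) (A : algType F) (Wm Wp G Gt : nat -> A).
Hypotheses (hq0 : q != 0) (hq2 : q ^+ 2 != 1) (hq4 : q ^+ 4 != 1).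
Hypothesis hrel : Oq_relations q Wm Wp G Gt.

Local Notation a := (Wm 0%N).
Local Notation b := (Wp 0%N).
Local Notation Bd := (Bdelta q a b).
Local Notation K := (q + q^-1).
Local Notation P n := (comm a (Wp n)).

Let comm_W0_Wp k : P k = K^-1 *: (Gt k - G k) := (hrel.1 k).1.
Let comm_Wm_W1 k : comm (Wm k) b = K^-1 *: (Gt k - G k) := (hrel.1 k).2.
Let qcomm_W0_G k : qcomm q a (G k) = rho q *: (Wm k.+1 - Wp k) := (hrel.2.1 k).1.
Let qcomm_Gt_W0 k : qcomm q (Gt k) a = rho q *: (Wm k.+1 - Wp k) := (hrel.2.1 k).2.
Let qcomm_G_W1 k : qcomm q (G k) b = rho q *: (Wp k.+1 - Wm k) := (hrel.2.2.1 k).1.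
Let qcomm_W1_Gt k : qcomm q b (Gt k) = rho q *: (Wp k.+1 - Wm k) := (hrel.2.2.1 k).2.
Let comm_Wm k l : comm (Wm k) (Wm l) = 0 := (hrel.2.2.2.1 k l).1.
Let comm_Wp k l : comm (Wp k) (Wp l) = 0 := (hrel.2.2.2.1 k l).2.
Let comm_G k l : comm (G k) (G l) = 0 := (hrel.2.2.2.2.2.2.1 k l).1.
Let comm_Gt k l : comm (Gt k) (Gt l) = 0 := (hrel.2.2.2.2.2.2.1 k l).2.
Let comm_Gt_G k l : comm (Gt k) (G l) + comm (G k) (Gt l) = 0 := hrel.2.2.2.2.2.2.2 k l.

Let hK : K != 0 := qaddV_neq0 hq0 hq4.
Let hrho : rho q != 0 := rho_neq0 hq0 hq2 hq4.

Lemma G_Gt k : G k = Gt k - K *: P k.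
Proof. by rewrite comm_W0_Wp scalerA mulfV // scale1r subKr. Qed.

Lemma comm_W0_Gt n : comm a (Gt n) = qcomm q a (P n).
Proof.
have E : qcomm q a (G n) = qcomm q (Gt n) a by rewrite qcomm_W0_G qcomm_Gt_W0.
rewrite G_Gt qcommBr qcommZr in E.
by apply: (scalerI hK); rewrite -qcommB_comm -E subKr.
Qed.

Lemma comm_W1_Gt n : comm b (Gt n) = - qcomm q (P n) b.
Proof.
have E : qcomm q (G n) b = qcomm q b (Gt n) by rewrite qcomm_G_W1 qcomm_W1_Gt.
rewrite G_Gt qcommBl qcommZl in E.
by rewrite commC; congr (- _); apply: (scalerI hK); rewrite -qcommB_comm -E subKr.
Qed.

Lemma comm_Gt_subG (k l : nat) : comm (Gt k - G k) (Gt l - G l) = 0.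
Proof.
by rewrite commBl !commBr comm_G comm_Gt subr0 sub0r -opprD comm_Gt_G oppr0.
Qed.

Lemma comm_Bdelta_Gtilde j : comm Bd (Gtilde q Gt j) = 0.
Proof.
case: j => [|n] /=; first by rewrite commC comm_alg oppr0.
rewrite (comm_Bdelta_qcomm hq0 (comm_W0_Gt n) (comm_W1_Gt n)).
by rewrite (commC a b) commNl !comm_W0_Wp commZl commZr comm_Gt_subG !scaler0 oppr0 scaler0.
Qed.

Lemma comm_W0_Gt_Bdelta n : comm a (Gt n) = q *: comm Bd (Wm n).
Proof.
rewrite comm_W0_Gt (comm_Bdelta_l b hq0 (comm_Wm 0 n)).
by rewrite comm_Wm_W1 comm_W0_Wp.
Qed.

Lemma comm_W1_Gt_Bdelta n : comm b (Gt n) = q *: comm Bd (Wp n).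
Proof. by rewrite comm_W1_Gt (comm_Bdelta_r a hq0 (comm_Wp 0 n)). Qed.

Lemma WmS n :
  Wm n.+1 = Wp n + (rho q)^-1 *: ((q - q^-1) *: (Gt n * a) - comm Bd (Wm n)).
Proof.
rewrite -(subrKC (Wp n) (Wm n.+1)) -(scalerK hrho (Wm n.+1 - Wp n)) -qcomm_Gt_W0 /qcomm.
have -> : a * Gt n = Gt n * a + q *: comm Bd (Wm n) by rewrite -comm_W0_Gt_Bdelta subrKC.
congr (_ + _ *: _).
by rewrite scalerDr scalerA mulVf // scale1r scalerBl opprD addrA.
Qed.

Lemma WpS n :
  Wp n.+1 = Wm n + (rho q)^-1 *: ((q - q^-1) *: (Gt n * b) + q ^+ 2 *: comm Bd (Wp n)).
Proof.
rewrite -(subrKC (Wm n) (Wp n.+1)) -(scalerK hrho (Wp n.+1 - Wm n)) -qcomm_W1_Gt /qcomm.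
have -> : b * Gt n = Gt n * b + q *: comm Bd (Wp n) by rewrite -comm_W1_Gt_Bdelta subrKC.
congr (_ + _ *: _).
by rewrite scalerDr scalerA -expr2 scalerBl addrAC.
Qed.

Definition Wm_series n : A := \sum_(k < n.+1) Gtilde q Gt (n - k) * Wm_term q a b k.
Definition Wp_series n : A := \sum_(k < n.+1) Gtilde q Gt (n - k) * Wp_term q a b k.

Lemma comm_Bdelta_convolution n (f : nat -> A) :
  comm Bd (\sum_(k < n.+1) Gtilde q Gt (n - k) * f k) =
  \sum_(k < n.+1) Gtilde q Gt (n - k) * comm Bd (f k).
Proof.
by rewrite comm_sumr; apply: eq_bigr => k _; rewrite commMr comm_Bdelta_Gtilde mul0r add0r.
Qed.

Lemma Wm_seriesS n :
  Wm_series n.+1 = Gt n * (K ^- 2 *: a) + Wp_series n - (rho q)^-1 *: comm Bd (Wm_series n).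
Proof.
rewrite /Wm_series /Wp_series big_ord_recl subn0 Wm_term0 // comm_Bdelta_convolution.
under eq_bigr do rewrite lift0 subSS (Wm_termS a b hq0 hq2 hq4) mulrBr -scalerAr.
by rewrite sumrB -scaler_sumr addrA.
Qed.

Lemma Wp_seriesS n :
  Wp_series n.+1 =
  Gt n * (K ^- 2 *: b) + Wm_series n + (q ^+ 2 / rho q) *: comm Bd (Wp_series n).
Proof.
rewrite /Wm_series /Wp_series big_ord_recl subn0 Wp_term0 // comm_Bdelta_convolution.
under eq_bigr do rewrite lift0 subSS (Wp_termS a b hq0 hq2 hq4) mulrDr -scalerAr.
by rewrite big_split -scaler_sumr addrA.
Qed.

Lemma W_series n :
  Wm n = - (q - q^-1)^-1 *: Wm_series n /\ Wp n = - (q - q^-1)^-1 *: Wp_series n.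
Proof.
elim: n => [|n [IHm IHp]].
  (* The convention G~_0 = -(q - q^-1) [2]_q^2 is exactly what the case n = 0 needs. *)
  rewrite /Wm_series /Wp_series !big_ord1 Wm_term0 // Wp_term0 // /= qint2E //.
  by rewrite !mulr_algl !scalerA -mulrA mulfK ?expf_neq0 // mulrNN mulVf ?scale1r ?qsubV_neq0.
split.
- rewrite WmS IHp [in comm _ _]IHm Wm_seriesS -scalerAr commZr.
  move: (comm Bd (Wm_series n)) (Gt n * a) (Wp_series n) => w g y.
  rewrite !scalerBr !scalerDr !scalerA (rhoV_qsubV hq0 hq2 hq4).
  by rewrite [(rho q)^-1 * _]mulrC addrCA addrA.
- rewrite WpS IHm [in comm _ _]IHp Wp_seriesS -scalerAr commZr.
  move: (comm Bd (Wp_series n)) (Gt n * b) (Wm_series n) => w g x.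
  rewrite !scalerDr !scalerA (rhoV_qsubV hq0 hq2 hq4) addrCA addrA.
  by congr (_ + _ *: _); ring.
Qed.
End OqRelations.

Theorem proposition11p8 (F : fieldType) (q : F)
  (hq0 : q != 0) (hq : forall n : nat, (0 < n)%N -> q ^+ n != 1)
  (A : algType F) (Wm Wp G Gt : nat -> A)
  (hrel : Oq_relations q Wm Wp G Gt) (n : nat) :
  Wm n = - (q - q^-1)^-1 *:
    \sum_(k < n.+1) \sum_(l < k.+1)
      (('C(k, l)%:R * q ^ (2 * (l : nat)%:Z - (k : nat)%:Z) * qint q 2 ^- (k + 2))
        *: (Gtilde q Gt (n - k) * B0 q (Wm 0%N) (Wp 0%N) ((k : nat)%:Z - 2 * (l : nat)%:Z)))
  /\
  Wp n = - (q - q^-1)^-1 *: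
    \sum_(k < n.+1) \sum_(l < k.+1)
      (('C(k, l)%:R * q ^ ((k : nat)%:Z - 2 * (l : nat)%:Z) * qint q 2 ^- (k + 2))
        *: (Gtilde q Gt (n - k) * B1 q (Wm 0%N) (Wp 0%N) ((k : nat)%:Z - 2 * (l : nat)%:Z))).
Proof.
have [hq2 hq4] : q ^+ 2 != 1 /\ q ^+ 4 != 1 by split; apply: hq.
have [-> ->] := W_series hq0 hq2 hq4 hrel n.
by split; congr (_ *: _); apply: eq_bigr => k _;
  rewrite mulr_sumr; apply: eq_bigr => l _; rewrite scalerAr.
Qed.
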